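(* Let $a,b,c,d,e\in\mathbb C$ with $a\notin\mathbb Z$ and $e\notin\{0,-1,-2,\dots\}$. Then, as an identity of formal power series in $x,y$, $$F(a,b;e;x)\,F(c,d;1-a;y)=H_2(a,b,c,d;e;x,-y)+\sum_{k=1}^\infty\sum_{l=1}^k\frac{(k-1)!}{(l-1)!\,l!\,(k-l)!}\,\frac{(-1)^{k-l}(b)_l(c)_k(d)_k}{(1-a)_k(1-a)_{k-l}(e)_l}\,x^ly^k\,H_2(a-k+l,b+l,c+k,d+k;e+l;x,-y).$$
   Context: Pochhammer symbol: $(\lambda)_k=\Gamma(\lambda+k)/\Gamma(\lambda)$ for every integer $k$ (possibly negative) whenever defined; $(\lambda)_0=1$. Gauss function $F(a,b;c;x)=\sum_{k\ge0}\frac{(a)_k(b)_k}{(c)_k k!}x^k$. Horn's function $H_2(a,b,c,d;e;x,y)=\sum_{p,q\ge0}\frac{(a)_{p-q}(b)_p(c)_q(d)_q}{(e)_p\,p!\,q!}x^py^q$. All functions are regarded as formal power series in $x,y$; the infinite double sum converges in the formal (degree) topology. *)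

From HB Require Import structures.
From mathcomp Require Import all_boot all_order all_algebra.
Set Implicit Arguments. Unset Strict Implicit. Unset Printing Implicit Defensive.
Import Order.TTheory GRing.Theory Num.Theory.
Local Open Scope ring_scope.

Section Defs.
Variable R : numClosedFieldType.

(* Pochhammer symbol (lambda)_k = Gamma(lambda+k)/Gamma(lambda), k : int.
   k = n >= 0 : lambda (lambda+1) ... (lambda+n-1);
   k = -(n+1) : 1 / ((lambda-1)(lambda-2)...(lambda-n-1)). *)
Definition poch (x : R) (k : int) : R :=
  match k with
  | Posz n => \prod_(i < n) (x + i%:R)
  | Negz n => (\prod_(i < n.+1) (x - (i.+1)%:R))^-1
  end.

(* Formal power series in x,y : coefficient of x^p y^q. *)
Definition ps := nat -> nat -> R.

Definition psmul (f g : ps) : ps := fun p q =>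
  \sum_(i < p.+1) \sum_(j < q.+1) f i j * g (p - i)%N (q - j)%N.

Definition psX (l k : nat) : ps := fun p q => ((p == l) && (q == k))%:R.

Definition psscale (c : R) (f : ps) : ps := fun p q => c * f p q.

Definition Fx (a b c : R) : ps := fun p q =>
  if q == 0%N then poch a p * poch b p / (poch c p * (p`!)%:R) else 0.

Definition Fy (a b c : R) : ps := fun p q =>
  if p == 0%N then poch a q * poch b q / (poch c q * (q`!)%:R) else 0.

Definition H2 (a b c d e : R) : ps := fun p q =>
  poch a (p%:Z - q%:Z) * poch b p * poch c q * poch d q
  / (poch e p * (p`!)%:R * (q`!)%:R).

Definition H2neg (a b c d e : R) : ps := fun p q =>
  (-1) ^+ q * H2 a b c d e p q.

Definition Tkl (a b c d e : R) (k l : nat) : ps :=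
  psscale ((((k.-1)`!)%:R / (((l.-1)`!)%:R * (l`!)%:R * ((k - l)`!)%:R))
           * ((-1) ^+ (k - l) * poch b l * poch c k * poch d k
              / (poch (1 - a) k * poch (1 - a) (k - l)%N * poch e l)))
    (psmul (psX l k)
       (H2neg (a - k%:R + l%:R) (b + l%:R) (c + k%:R) (d + k%:R) (e + l%:R))).

(* Formal sum over k >= 1, 1 <= l <= k.  Since Tkl k l is a multiple of y^k,
   only k <= q contributes to the coefficient of x^p y^q, so the formal
   (degree-topology) limit has this coefficient. *)
Definition Tsum (a b c d e : R) : ps := fun p q =>
  \sum_(1 <= k < q.+1) \sum_(1 <= l < k.+1) Tkl a b c d e k l p q.

End Defs.

(* The reflection formula
   (a - m)_(m + s) = (-1)^m (1 - a)_m (a)_s, with m = k - l and s = p - q,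
   makes every term of the double sum a multiple of the coefficient h of
   H_2(a,b,c,d;e;x,-y).  Vandermonde's identity sums it over l, leaving
   h * sum_(1 <= k <= q) C(q,k) (-1)^k (p)_k / (1 - a)_k; together with h itself
   (the term k = 0) this is h times the Chu-Vandermonde sum
   F(-q, p; 1 - a; 1) = (1 - a - p)_q / (1 - a)_q, and the reflection
   (-1)^q (a)_(p - q) (1 - a - p)_q = (a)_p turns the result into the
   coefficient of the product of the two Gauss series. *)

From HB Require Import structures.
From mathcomp Require Import all_boot all_order all_algebra.
From mathcomp Require Import ring zify.
Import Order.TTheory GRing.Theory Num.Theory.
Local Open Scope ring_scope.

Set Implicit Arguments.
Unset Strict Implicit.
Unset Printing Implicit Defensive.

Arguments poch : simpl never.

Section Pochhammer.
Variable R : numClosedFieldType.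
Implicit Types (x : R) (m n : nat) (r s : int).

Lemma poch0 x : poch x 0%N = 1.
Proof. exact: big_ord0. Qed.

Lemma pochS x n : poch x n.+1 = poch x n * (x + n%:R).
Proof. by rewrite /poch big_ord_recr. Qed.

Lemma pochSr x n : poch x n.+1 = x * poch (x + 1) n.
Proof.
rewrite /poch big_ord_recl addr0; congr (_ * _).
by apply: eq_bigr => i _; rewrite -nat1r addrA.
Qed.

Lemma pochD x m n : poch x (m + n)%N = poch x m * poch (x + m%:R) n.
Proof.
elim: n => [|n IH]; first by rewrite addn0 poch0 mulr1.
by rewrite addnS !pochS IH natrD addrA mulrA.
Qed.

Lemma poch_oppn x n : poch x (- n%:Z) = (poch (x - n%:R) n)^-1.
Proof.
case: n => [|n]; first by rewrite /poch /= !big_ord0 invr1.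
rewrite /poch /=; congr (_^-1).
rewrite (reindex_inj rev_ord_inj); apply: eq_bigr => i _ /=.
have i_le_n : (i <= n)%N by rewrite -ltnS.
by rewrite subSS -subSn // natrB 1?ltnW //; ring.
Qed.

Lemma poch_reflect x n : poch (1 - x - n%:R) n = (-1) ^+ n * poch x n.
Proof.
elim: n x => [|n IH] x; first by rewrite !poch0 mulr1.
rewrite pochSr pochS -natr1.
have -> : 1 - x - (n%:R + 1) + 1 = 1 - x - n%:R by ring.
by rewrite IH exprS; ring.
Qed.

Lemma poch_neq0 x n : (forall i : nat, x + i%:R != 0) -> poch x n != 0.
Proof. by move=> hx; apply/prodf_neq0 => i _. Qed.

Definition nonint x := forall j : int, x != j%:~R.

Lemma nonint_addn_neq0 x : nonint x -> forall i : nat, x + i%:R != 0.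
Proof. by move=> hx i; rewrite addr_eq0; have := hx (- i%:Z); rewrite intrN. Qed.

Lemma nonint_addz x r : nonint x -> nonint (x + r%:~R).
Proof.
move=> hx j; apply: contra (hx (j - r)) => /eqP xr_j.
by rewrite intrB -xr_j addrK.
Qed.

Lemma nonint_subn x n : nonint x -> nonint (x - n%:R).
Proof. by move=> hx; have := nonint_addz (- n%:Z) hx; rewrite intrN. Qed.

Lemma nonint_reflect x : nonint x -> nonint (1 - x).
Proof.
move=> hx j; apply: contra (hx (1 - j)) => /eqP x_j.
by rewrite intrB -x_j opprB addrC subrK.
Qed.

Lemma poch_succz x r : nonint x -> poch x (r + 1) = poch x r * (x + r%:~R).
Proof.
move=> hx; case: r => n; first by rewrite -PoszD addn1 pochS.
have x_n1 : x - n.+1%:R != 0 by rewrite subr_eq0; exact: hx (Posz n.+1).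
have -> : - (n.+1 : int) + 1 = - n%:Z by rewrite -addn1 PoszD opprD addrK.
rewrite NegzE !poch_oppn pochSr intrN invfM mulrAC mulVf // mul1r.
by rewrite -natr1 opprD addrA subrK.
Qed.

Lemma pochDn x r n : nonint x ->
  poch x (r + n%:Z) = poch x r * poch (x + r%:~R) n.
Proof.
move=> hx; elim: n => [|n IH]; first by rewrite addr0 poch0 mulr1.
have -> : r + n.+1%:Z = r + n%:Z + 1 by rewrite -addn1 PoszD addrA.
by rewrite poch_succz // IH pochS intrD addrA mulrA.
Qed.

Lemma pochDz x r s : nonint x -> poch x (r + s) = poch x r * poch (x + r%:~R) s.
Proof.
move=> hx; case: s => n; first exact: pochDn.
rewrite NegzE poch_oppn.
have /(congr1 (poch x)) := subrK (Posz n.+1) r.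
rewrite pochDn // intrB addrA => <-.
have P_neq0 : poch (x + r%:~R - n.+1%:R) n.+1 != 0.
  apply/poch_neq0/nonint_addn_neq0/nonint_subn.
  exact: nonint_addz.
by rewrite mulfK.
Qed.

Lemma poch_split x m n : (m <= n)%N ->
  poch x n = poch x m * poch (x + m%:R) (n - m)%N.
Proof. by move=> m_le_n; rewrite -pochD subnKC. Qed.

Lemma poch_subn_addz x m s : nonint x ->
  poch (x - m%:R) (m%:Z + s) = (-1) ^+ m * poch (1 - x) m * poch x s.
Proof.
move=> hx; rewrite pochDz; last exact: nonint_subn.
have -> : x - m%:R + m%:~R = x by apply: subrK.
by rewrite -poch_reflect; congr (poch _ _ * _); ring.
Qed.

Lemma poch_split_reflect x n m : nonint x ->
  (-1) ^+ m * poch x (n%:Z - m%:Z) * poch (1 - x - n%:R) m = poch x n.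
Proof.
move=> hx.
have -> : 1 - x - n%:R = 1 - (x + (n%:Z - m%:Z)%:~R) - m%:R.
  by rewrite intrB; ring.
by rewrite poch_reflect -mulrA mulrCA signrMK -pochDz // subrK.
Qed.

End Pochhammer.

Section Series.
Variable R : numClosedFieldType.
Implicit Types f g : ps R.

Lemma psmulX l k f p q :
  psmul (psX R l k) f p q
  = if (l <= p)%N && (k <= q)%N then f (p - l)%N (q - k)%N else 0.
Proof.
transitivity (\sum_(i < p.+1 | i == l :> nat)
                \sum_(j < q.+1 | j == k :> nat) f (p - i)%N (q - j)%N).
  rewrite /psmul /psX [RHS]big_mkcond; apply: eq_bigr => i _ /=.
  case: eqP => _ /=; last by rewrite big1 // => j _; rewrite mul0r.
  rewrite [RHS]big_mkcond; apply: eq_bigr => j _ /=.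
  by case: eqP; rewrite ?mul1r ?mul0r.
rewrite (big_ord1_eq _
  (fun i => \sum_(j < q.+1 | j == k :> nat) f (p - i)%N (q - j)%N)).
rewrite (big_ord1_eq _ (fun j => f (p - l)%N (q - j)%N)) !ltnS.
by case: (l <= p)%N; case: (k <= q)%N.
Qed.

Lemma psmul_sep f g p q :
  (forall i j, j != 0%N -> f i j = 0) -> (forall i j, i != 0%N -> g i j = 0) ->
  psmul f g p q = f p 0%N * g 0%N q.
Proof.
move=> f_x g_y; rewrite /psmul big_ord_recr /= big1 ?add0r => [|i _].
  rewrite big_ord_recl big1 ?addr0 ?subnn ?subn0 // => j _.
  by rewrite f_x ?mul0r.
by rewrite big1 // => j _; rewrite g_y ?mulr0 // subn_eq0 -ltnNge.
Qed.

End Series.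

Lemma vandermonde_shift p j :
  (\sum_(l < j.+1) 'C(j, l) * 'C(p, l.+1))%N = 'C(p + j, j.+1).
Proof.
rewrite -binomial.Vandermonde [RHS]big_ord_recl subn0.
rewrite (bin_small (ltnSn j)) muln0 add0n.
by apply: eq_bigr => l _; rewrite mulnC subSS bin_sub // -ltnS.
Qed.

Section Factorials.
Variable R : numClosedFieldType.

Lemma natr_fact_neq0 n : n`!%:R != 0 :> R.
Proof. by rewrite pnatr_eq0 -lt0n fact_gt0. Qed.

Lemma natr_bin m n : (m <= n)%N ->
  'C(n, m)%:R = n`!%:R / (m`!%:R * (n - m)`!%:R) :> R.
Proof.
move=> m_le_n; rewrite -(bin_fact m_le_n) !natrM mulfK //.
by rewrite mulf_neq0 // natr_fact_neq0.
Qed.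

Lemma natr_ffact m n : (m <= n)%N -> (n ^_ m)%:R = n`!%:R / (n - m)`!%:R :> R.
Proof.
by move=> m_le_n; rewrite -(ffact_fact m_le_n) natrM mulfK ?natr_fact_neq0.
Qed.

Lemma poch_natr p j : poch (p%:R : R) j.+1 = (j.+1`! * 'C(p + j, j.+1))%:R.
Proof.
elim: j => [|j IH]; first by rewrite pochSr poch0 addn0 bin1 mul1n mulr1.
rewrite pochS IH -natrD -natrM addnS [(j.+2)`!]factS; congr _%:R.
by rewrite [RHS]mulnAC -mul_bin_diag /=; ring.
Qed.

End Factorials.

Section ChuVandermonde.
Variable R : numClosedFieldType.

Lemma chu_vandermonde q (u x : R) : (forall i : nat, u + i%:R != 0) ->
  \sum_(k < q.+1) 'C(q, k)%:R * (-1) ^+ k * poch x k / poch u k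
  = poch (u - x) q / poch u q.
Proof.
elim: q u x => [|q IH] u x hu.
  by rewrite big_ord1 !poch0 bin0 expr0 !mulr1.
have u_neq0 : u != 0 by have := hu 0%N; rewrite addr0.
have hu1 : forall i : nat, u + 1 + i%:R != 0.
  by move=> i; rewrite -addrA nat1r; exact: hu.
rewrite big_ord_recl /=.
under eq_bigr => i _ do rewrite /bump /= add1n binS natrD !mulrDl.
rewrite big_split addrA /=.
have -> : 'C(q.+1, 0)%:R * (-1) ^+ 0 * poch x 0%N / poch u 0%N
    + \sum_(i < q.+1) 'C(q, i.+1)%:R * (-1) ^+ i.+1 * poch x i.+1 / poch u i.+1
    = \sum_(k < q.+1) 'C(q, k)%:R * (-1) ^+ k * poch x k / poch u k.
  rewrite [RHS]big_ord_recl big_ord_recr /= (bin_small (ltnSn q)).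
  by rewrite mulr0n !mul0r addr0 !bin0.
have -> : \sum_(i < q.+1) 'C(q, i)%:R * (-1) ^+ i.+1 * poch x i.+1 / poch u i.+1
    = - (x / u) * \sum_(k < q.+1)
        'C(q, k)%:R * (-1) ^+ k * poch (x + 1) k / poch (u + 1) k.
  rewrite mulr_sumr; apply: eq_bigr => i _; rewrite !pochSr exprS.
  by field; rewrite u_neq0 poch_neq0.
have poch_u1 : poch (u + 1) q = poch u q * (u + q%:R) / u.
  by rewrite -pochS pochSr mulrC mulKf.
rewrite !IH // (_ : u + 1 - (x + 1) = u - x); last by ring.
rewrite poch_u1 !pochS; field.
by rewrite u_neq0 poch_neq0 ?hu.
Qed.

End ChuVandermonde.

Section Hypergeometric.
Variables (R : numClosedFieldType) (a b c d e : R).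
Hypothesis a_nonint : nonint a.
Hypothesis e_addn_neq0 : forall i : nat, e + i%:R != 0.

Let reflect_addn_neq0 : forall i : nat, 1 - a + i%:R != 0 :=
  nonint_addn_neq0 (nonint_reflect a_nonint).

Lemma Tkl_coef k l p q : (0 < l <= k)%N -> (k <= q)%N ->
  Tkl a b c d e k l p q = H2neg a b c d e p q
    * ((-1) ^+ k * (q ^_ k)%:R / poch (1 - a) k) * ('C(k.-1, l.-1) * 'C(p, l))%:R.
Proof.
case/andP=> l_gt0 l_le_k k_le_q.
rewrite /Tkl /psscale psmulX k_le_q andbT.
have [l_le_p | p_lt_l] := leqP l p.
  2: by rewrite (bin_small p_lt_l) muln0 mulr0n !mulr0.
rewrite /H2neg /H2 (exprB k_le_q) ?unitrN1 // invr_sign -(invr_sign _ (k - l)).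
have -> : a - k%:R + l%:R = a - (k - l)%N%:R by rewrite natrB //; ring.
have -> : (p - l)%N%:Z - (q - k)%N%:Z = (k - l)%N%:Z + (p%:Z - q%:Z) by lia.
rewrite poch_subn_addz // (poch_split b l_le_p) (poch_split c k_le_q).
rewrite (poch_split d k_le_q) (poch_split e l_le_p).
have l1_le_k1 : (l.-1 <= k.-1)%N by lia.
rewrite (natr_ffact _ k_le_q) natrM (natr_bin _ l1_le_k1) (natr_bin _ l_le_p).
have -> : (k.-1 - l.-1 = k - l)%N by lia.
field; rewrite !natr_fact_neq0 signr_eq0 !poch_neq0 //.
by move=> i; rewrite -addrA -natrD.
Qed.

Lemma Tsum_coef p q :
  Tsum a b c d e p q = H2neg a b c d e p q *
    \sum_(1 <= k < q.+1) 'C(q, k)%:R * (-1) ^+ k * poch p%:R k / poch (1 - a) k.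
Proof.
rewrite /Tsum mulr_sumr; apply: eq_big_nat => k /andP[k_gt0 k_le_q].
under eq_big_nat => l l_bd do rewrite Tkl_coef //.
rewrite -mulr_sumr -natr_sum.
case: k k_gt0 {k_le_q} => // j _.
rewrite big_add1 big_mkord /= vandermonde_shift poch_natr -bin_ffact !natrM.
ring.
Qed.

End Hypergeometric.

Theorem mainTheorem3 (R : numClosedFieldType) (a b c d e : R)
  (ha : forall n : int, a != n%:~R)
  (he : forall n : nat, e != - n%:R) :
  forall p q : nat,
    psmul (Fx a b e) (Fy c d (1 - a)) p q
    = H2neg a b c d e p q + Tsum a b c d e p q.
Proof.
move=> p q.
have e_addn_neq0 : forall i : nat, e + i%:R != 0.
  by move=> i; rewrite addr_eq0; exact: he.
have u_addn_neq0 := nonint_addn_neq0 (nonint_reflect ha).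
rewrite psmul_sep => [|i j /negbTE j_neq0|i j /negbTE i_neq0]; last first.
- by rewrite /Fy i_neq0.
- by rewrite /Fx j_neq0.
rewrite Tsum_coef // -{1}[H2neg a b c d e p q]mulr1 -mulrDr.
have -> : 1 + \sum_(1 <= k < q.+1)
               'C(q, k)%:R * (-1) ^+ k * poch p%:R k / poch (1 - a) k
    = \sum_(k < q.+1) 'C(q, k)%:R * (-1) ^+ k * poch p%:R k / poch (1 - a) k.
  rewrite big_add1 big_mkord [RHS]big_ord_recl /=.
  by rewrite bin0 expr0 !poch0 !mulr1 divr1.
rewrite chu_vandermonde // /Fx /Fy /H2neg /H2 /=.
rewrite -(poch_split_reflect p q ha).
field; rewrite !natr_fact_neq0 !poch_neq0 //.
Qed.
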